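(* For all integers $k\geq 1$ and $n\geq 0$, \[ f_{n}^{(k)}= \sum_{j=0}^{\lfloor n/(k+1)\rfloor} (-1)^j\,\frac{(n-jk)+j+\delta_{n,0}}{2(n-jk)+\delta_{n,0}}\, \binom{n-jk}{j}\, 2^{n-j(k+1)}, \] where $\delta_{n,0}$ is the Kronecker delta ($\delta_{n,0}=1$ if $n=0$ and $0$ otherwise).
   Context: For an integer $k\geq 1$, the $k$-bonacci numbers $f_n^{(k)}$ ($n\in\mathbb{Z}$) are defined by $f_n^{(k)}=0$ for $n<0$, $f_0^{(k)}=1$, and $f_n^{(k)}=\sum_{i=1}^{k} f_{n-i}^{(k)}$ for $n\geq 1$. Here $\lfloor x\rfloor$ is the floor function. *)

From mathcomp Require Import all_boot all_order all_algebra.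
Set Implicit Arguments. Unset Strict Implicit. Unset Printing Implicit Defensive.

(* kb_list k n = [:: f_n; f_{n-1}; ...; f_0] for the k-bonacci numbers.
   f_n = f_{n-1} + ... + f_{n-k}, with f_m = 0 for m < 0, f_0 = 1. *)
Fixpoint kb_list (k n : nat) : seq nat :=
  match n with
  | 0 => [:: 1]
  | n'.+1 => let s := kb_list k n' in sumn (take k s) :: s
  end.

Definition kbonacci (k n : nat) : nat := head 0 (kb_list k n).

Lemma kbonacci_test : [seq kbonacci 2 n | n <- iota 0 8] = [:: 1; 1; 2; 3; 5; 8; 13; 21].
Proof. by []. Qed.
Lemma kbonacci_test3 : [seq kbonacci 3 n | n <- iota 0 8] = [:: 1; 1; 2; 4; 7; 13; 24; 44].
Proof. by []. Qed.

From mathcomp Require Import all_boot all_order all_algebra.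
From mathcomp Require Import zify.
From mathcomp.algebra_tactics Require Import ring.

Set Implicit Arguments.
Unset Strict Implicit.
Unset Printing Implicit Defensive.

Import GRing.Theory Num.Theory.
Local Open Scope ring_scope.

(* Since (1 - x)(1 - x - ... - x^k) = 1 - 2x + x^(k+1), the partial sums
   S_n = f_0 + ... + f_(n-1) satisfy S_(n+2) = 2 S_(n+1) - S_(n+1-k).
   By Pascal's rule the same recurrence holds for
   D_n = sum_j (-1)^j C(n-1-jk, j) 2^(n-1-j(k+1)), the coefficient of x^(n-1)
   in sum_j (-x^(k+1))^j / (1-2x)^(j+1) = 1 / (1 - 2x + x^(k+1)); hence D = S.
   The j-th summand of the formula for f_(m+1) is the j-th summand of
   D_(m+2) - D_(m+1) = S_(m+2) - S_(m+1) = f_(m+1). *)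

Lemma kb_listE k n : kb_list k n = rev [seq kbonacci k i | i <- iota 0 n.+1].
Proof.
elim: n => [|n IHn] //.
by rewrite -[n.+2]addn1 iotaD map_cat rev_cat -IHn.
Qed.

Lemma kbonacciS k n : kbonacci k n.+1 = (\sum_(n.+1 - k <= i < n.+1) kbonacci k i)%N.
Proof.
rewrite [LHS]/kbonacci /= kb_listE take_rev sumn_rev size_map size_iota.
by rewrite -map_drop drop_iota sumnE big_map.
Qed.

Definition kbonacci_psum k n : nat := \sum_(0 <= i < n) kbonacci k i.

Lemma kbonacci_psumS k n :
  kbonacci_psum k n.+1 = (kbonacci_psum k n + kbonacci k n)%N.
Proof. exact: big_nat_recr. Qed.

Lemma kbonacci_psum_window k n :
  (kbonacci_psum k (n.+1 - k) + kbonacci k n.+1)%N = kbonacci_psum k n.+1.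
Proof. by rewrite kbonacciS -big_cat_nat ?leq_subr. Qed.

Definition alt_binom (m j : nat) : rat := (-1) ^+ j * 'C(m, j)%:R * 2 ^+ (m - j).

Lemma alt_binom_small m j : (m < j)%N -> alt_binom m j = 0.
Proof. by move=> lt_mj; rewrite /alt_binom bin_small // mulr0 mul0r. Qed.

Lemma alt_binomS0 m : alt_binom m.+1 0 = 2 * alt_binom m 0.
Proof. by rewrite /alt_binom !subn0 !bin0 exprS; ring. Qed.

Lemma alt_binomSS m j : alt_binom m.+1 j.+1 = 2 * alt_binom m j.+1 - alt_binom m j.
Proof.
rewrite /alt_binom binS natrD !exprS subSS.
case: (ltnP j m) => [lt_jm|le_mj].
  by rewrite -(subnSK lt_jm) exprS; ring.
rewrite (bin_small (leq_ltn_trans le_mj _)) // (eqP le_mj) subnS /=; ring.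
Qed.

Lemma alt_binom_subS m j :
  alt_binom m.+1 j - alt_binom m j =
  (-1) ^+ j * ((m.+1 + j)%:R / (2 * m.+1)%:R) * 'C(m.+1, j)%:R * 2 ^+ (m.+1 - j).
Proof.
have down : 'C(m, j)%:R = (m.+1%:R - j%:R) / m.+1%:R * 'C(m.+1, j)%:R :> rat.
  case: (leqP j m.+1) => [le_jm|lt_mj]; last by rewrite !bin_small ?mulr0 // ltnW.
  rewrite -natrB // -mulrA mulrCA -natrM -mul_bin_down natrM.
  by rewrite mulKf ?pnatr_eq0.
have half : 'C(m, j)%:R * 2 ^+ (m - j) = 'C(m, j)%:R * 2 ^+ (m.+1 - j) / 2 :> rat.
  case: (leqP j m) => [le_jm|lt_mj]; last by rewrite bin_small // !mul0r.
  by rewrite (subSn le_jm) exprS; field.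
rewrite /alt_binom -[_ * _ * 2 ^+ (m - j)]mulrA half down natrM natrD; field.
by rewrite nat1r pnatr_eq0.
Qed.

Definition diag_sum k n : rat := \sum_(0 <= j < n) alt_binom (n.-1 - j * k) j.

Lemma diag_sum0 k : diag_sum k 0 = 0.
Proof. exact: big_geq. Qed.

Lemma alt_binom_diag_tail k m N N' : (m < N * k.+1)%N -> (N <= N')%N ->
  \sum_(0 <= j < N') alt_binom (m - j * k) j = \sum_(0 <= j < N) alt_binom (m - j * k) j.
Proof.
move=> lt_mN le_NN'; rewrite (big_cat_nat (leq0n N) le_NN') -[RHS]addr0 /=.
congr (_ + _); rewrite big_nat_cond big1 // => j /andP [/andP [le_Nj _] _].
by apply: alt_binom_small; nia.
Qed.

Lemma diag_sum_bound k m N : (m < N * k.+1)%N ->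
  \sum_(0 <= j < N) alt_binom (m - j * k) j = diag_sum k m.+1.
Proof.
move=> lt_mN; rewrite -(alt_binom_diag_tail lt_mN (leq_maxl N m.+1)).
by apply: alt_binom_diag_tail; rewrite ?leq_maxr // mulnS ltn_addr.
Qed.

Lemma diag_sum_shift k n :
  \sum_(0 <= j < n.+1 %/ k.+1) alt_binom (n - j.+1 * k) j = diag_sum k (n.+1 - k).
Proof.
case: (ltnP n k) => [lt_nk|le_kn].
  by rewrite divn_small // big_geq // (eqP lt_nk) diag_sum0.
have lt_nq : (n - k < n.+1 %/ k.+1 * k.+1)%N.
  by have := ltn_ceil n.+1 (ltn0Sn k); nia.
rewrite subSn // -(diag_sum_bound lt_nq).
by apply: eq_big_nat => j _; rewrite mulSn subnDA.
Qed.

Lemma diag_sumSS k n : diag_sum k n.+2 = 2 * diag_sum k n.+1 - diag_sum k (n.+1 - k).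
Proof.
set q := (n.+1 %/ k.+1)%N.
have ceil : (n.+1 < q.+1 * k.+1)%N by apply: ltn_ceil.
have floor j : (0 <= j < q)%N -> (j.+1 * k <= n)%N.
  by move=> /andP [_ lt_jq]; have := leq_divM n.+1 k.+1; rewrite -/q; nia.
rewrite -(diag_sum_bound ceil) -(diag_sum_bound (ltnW ceil)) -diag_sum_shift -/q.
rewrite !big_nat_recl //= !mul0n !subn0 alt_binomS0.
under eq_big_nat => j range do rewrite (subSn (floor j range)) alt_binomSS.
by rewrite sumrB -mulr_sumr; ring.
Qed.

Lemma diag_sum_psum k n : diag_sum k n = (kbonacci_psum k n)%:R.
Proof.
elim/ltn_ind: n => -[|[|n]] IH; first by rewrite diag_sum0 /kbonacci_psum big_geq.
  by rewrite /diag_sum big_nat1 /alt_binom /kbonacci_psum big_nat1.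
rewrite diag_sumSS !IH ?ltnS ?leq_subr //.
by rewrite (kbonacci_psumS k n.+1) -(kbonacci_psum_window k n) !natrD; ring.
Qed.

Definition kbonacci_summand k n j : rat :=
  (-1) ^+ j
    * (((n - j * k)%N + j + (n == 0%N))%:R / (2 * (n - j * k) + (n == 0%N))%N%:R)
    * ('C(n - j * k, j))%:R
    * 2 ^+ (n - j * k.+1).

Lemma kbonacci_summandS k m j : (j * k <= m)%N ->
  kbonacci_summand k m.+1 j = alt_binom (m.+1 - j * k) j - alt_binom (m - j * k) j.
Proof.
move=> le_jkm; rewrite subSn // alt_binom_subS /kbonacci_summand subSn //= !addn0.
by rewrite (_ : m.+1 - j * k.+1 = (m - j * k).+1 - j)%N //; lia.
Qed.

(* The identity also holds for k = 0, where f_n = [n == 0]; hence hk is unused. *)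
Theorem corollary3p2 (k n : nat) (hk : (1 <= k)%N) :
  (kbonacci k n)%:R =
  \sum_(0 <= j < (n %/ k.+1).+1)
    (-1) ^+ j
    * (((n - j * k)%N + j + (n == 0%N))%:R / (2 * (n - j * k) + (n == 0%N))%N%:R)
    * ('C(n - j * k, j))%:R
    * 2 ^+ (n - j * k.+1) :> rat.
Proof.
rewrite -[RHS]/(\sum_(0 <= j < (n %/ k.+1).+1) kbonacci_summand k n j).
case: n => [|m]; first by rewrite big_nat1 /kbonacci_summand /= mulr1 divr1.
set q := (m.+1 %/ k.+1)%N.
have ceil : (m.+1 < q.+1 * k.+1)%N by apply: ltn_ceil.
have floor j : (0 <= j < q.+1)%N -> (j * k <= m)%N.
  by move=> /andP [_ lt_jq]; have := leq_divM m.+1 k.+1; rewrite -/q; nia.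
rewrite (eq_big_nat _ _ (fun j range => kbonacci_summandS (floor j range))).
rewrite sumrB (diag_sum_bound ceil) (diag_sum_bound (ltnW ceil)) !diag_sum_psum.
by rewrite kbonacci_psumS natrD addrAC subrr add0r.
Qed.
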